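(* Let $G$ be a finite simple graph whose edge ideal $I=I(G)$ satisfies $v(I)=1$. Then $v(I^{n+1})=2n+1$ for all $n\ge 1$.
   Context: $K$ is a field and $S=K[x_1,\dots,x_t]$ is standard graded, with the vertices of $G$ being $x_1,\dots,x_t$. The edge ideal is $I(G)=\langle x_ix_j : \{x_i,x_j\}\text{ an edge of } G\rangle$. For a proper graded ideal $J$, the $v$-number is $v(J)=\min\{k\ge 0 : \exists f\in S_k,\ \mathcal P\in\operatorname{Ass}(S/J) \text{ with } (J:f)=\mathcal P\}$. *)

From HB Require Import structures.
From mathcomp Require Import all_boot all_algebra.
From mathcomp Require Import mpoly.
Set Implicit Arguments. Unset Strict Implicit. Unset Printing Implicit Defensive.
Import GRing.Theory.
Local Open Scope ring_scope.

Section Ideals.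
Variables (K : fieldType) (t : nat).
Local Notation S := {mpoly K[t]}.

Definition is_ideal (J : S -> Prop) : Prop :=
  [/\ J 0, (forall a b, J a -> J b -> J (a + b)) & (forall r a, J a -> J (r * a))].

Definition ideal_gen (gens : S -> Prop) : S -> Prop :=
  fun f => exists s : seq (S * S),
    (forall x, x \in s -> gens x.2) /\ f = \sum_(x <- s) x.1 * x.2.

Definition ideal_pow (J : S -> Prop) (m : nat) : S -> Prop :=
  ideal_gen (fun g => exists s : seq S,
    [/\ size s = m, (forall x, x \in s -> J x) & g = \prod_(x <- s) x]).

Definition colon (J : S -> Prop) (f : S) : S -> Prop := fun g => J (g * f).

Definition same_ideal (A B : S -> Prop) : Prop := forall g, A g <-> B g.

Definition is_prime_ideal (P : S -> Prop) : Prop :=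
  [/\ is_ideal P, ~ P 1 & (forall a b, P (a * b) -> P a \/ P b)].

(* Ass(S/J): prime ideals which are annihilators (J : g) of elements of S/J *)
Definition Ass (J : S -> Prop) (P : S -> Prop) : Prop :=
  is_prime_ideal P /\ exists g : S, same_ideal (colon J g) P.

Definition v_number_is (J : S -> Prop) (k : nat) : Prop :=
  (exists (f : S) (P : S -> Prop),
      [/\ f \is k.-homog, Ass J P & same_ideal (colon J f) P]) /\
  (forall (k' : nat) (f : S) (P : S -> Prop),
      (k' < k)%N -> f \is k'.-homog -> Ass J P -> ~ same_ideal (colon J f) P).

Definition edge_ideal (e : rel 'I_t) : S -> Prop :=
  ideal_gen (fun g => exists i j : 'I_t, e i j /\ g = 'X_i * 'X_j).

End Ideals.

Definition simple_graph (t : nat) (e : rel 'I_t) : Prop :=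
  ssrbool.symmetric e /\ ssrbool.irreflexive e.

From mathcomp Require Import all_boot all_algebra.
From mathcomp Require Import mpoly zify.
Set Implicit Arguments. Unset Strict Implicit. Unset Printing Implicit Defensive.
Import GRing.Theory.
Local Open Scope ring_scope.

(* Since v(I) = 1, there is a linear form f with (I : f) = P prime. If x is
   the variable in the leading monomial of f, every variable z in P is a
   neighbour of x, because z f lies in I; as P contains every edge, the
   neighbourhood N(x) is a vertex cover. The graph has an edge xy, since
   otherwise I = 0 and v(I) = 0. Every product of n + 1 edges has degree at
   least n + 1 in N(x), whereas x^(n+1) y^n has degree n there, so
   (I^(n+1) : x^(n+1) y^n) = (N(x)), which is prime: v(I^(n+1)) <= 2n + 1.
   Conversely, a prime P = (I^(n+1) : f) contains (x y)^(n+1), hence a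
   variable z, and z f is a nonzero element of I^(n+1), which lives in degrees
   >= 2n + 2; so deg f >= 2n + 1. *)

Section Ideals.
Variables (K : fieldType) (t : nat).
Local Notation S := {mpoly K[t]}.
Implicit Types (J P : S -> Prop) (f g : S).

Lemma ideal_gen_is_ideal (gens : S -> Prop) : is_ideal (ideal_gen gens).
Proof.
split; first by exists [::]; rewrite big_nil.
- move=> a b [s1 [h1 ->]] [s2 [h2 ->]]; exists (s1 ++ s2).
  split; last by rewrite big_cat.
  by move=> p; rewrite mem_cat => /orP[/h1|/h2].
- move=> r a [s [h ->]]; exists [seq (r * p.1, p.2) | p <- s]; split.
    by move=> _ /mapP[p ps ->]; exact: h p ps.
  by rewrite big_map mulr_sumr; apply: eq_bigr => p _; rewrite mulrA.
Qed.

Lemma mem_ideal_gen (gens : S -> Prop) g : gens g -> ideal_gen gens g.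
Proof.
move=> hg; exists [:: (1, g)]; split; first by move=> p; rewrite inE => /eqP ->.
by rewrite big_seq1 mul1r.
Qed.

Lemma ideal_sum J (I : eqType) (r : seq I) (F : I -> S) :
  is_ideal J -> (forall i, i \in r -> J (F i)) -> J (\sum_(i <- r) F i).
Proof.
case=> J0 JD _; elim: r => [|i r IHr] JF; first by rewrite big_nil.
rewrite big_cons; apply: JD; first exact/JF/mem_head.
by apply: IHr => j rj; apply: JF; rewrite inE rj orbT.
Qed.

Lemma ideal_gen_sub (gens : S -> Prop) J :
  is_ideal J -> (forall g, gens g -> J g) -> forall f, ideal_gen gens f -> J f.
Proof.
move=> idJ gensJ _ [s [hs ->]]; apply: ideal_sum => // p ps.
by case: idJ => _ _; apply; apply/gensJ/hs.
Qed.

Lemma ideal_sub_colon J f P : is_ideal J -> same_ideal (colon J f) P -> forall g, J g -> P g.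
Proof. by case=> _ _ JM fP g Jg; apply/fP; rewrite /colon mulrC; exact: JM. Qed.

Lemma colon_neq0 J f P : J 0 -> ~ P 1 -> same_ideal (colon J f) P -> f != 0.
Proof. by move=> J0 P1 fP; apply/eqP => f0; apply/P1/fP; rewrite /colon f0 mulr0. Qed.

Lemma prime_ideal_prod P (s : seq S) :
  is_prime_ideal P -> P (\prod_(g <- s) g) -> exists2 g, g \in s & P g.
Proof.
case=> _ P1 Pprime; elim: s => [|g s IHs]; first by rewrite big_nil.
rewrite big_cons => /Pprime[Pg|/IHs[h hs Ph]]; first by exists g; rewrite ?mem_head.
by exists h; rewrite // inE hs orbT.
Qed.

Lemma v_number_is_zero_ideal J k :
  (forall g, J g <-> g = 0) -> v_number_is J k -> k = 0%N.
Proof.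
move=> J0 [[f [P [_ AssP fP]]] vmin]; case: k vmin => // k vmin; exfalso.
have fn0 : f != 0 by case: AssP => -[_ P1 _] _; apply: colon_neq0 P1 fP; exact/J0.
apply: (vmin 0%N 1 P) AssP _ => //; first exact: dhomog1.
move=> g; rewrite /colon mulr1; split => [/J0 -> | /fP /J0 /eqP].
  by apply/fP/J0; rewrite mul0r.
by rewrite mulf_eq0 (negbTE fn0) orbF => /eqP /J0.
Qed.

End Ideals.

Section EdgeMonomials.
Variables (K : fieldType) (t : nat) (e : rel 'I_t).
Local Notation S := {mpoly K[t]}.
Local Notation I := (@edge_ideal K t e).
Implicit Types (s : seq ('I_t * 'I_t)) (m : 'X_{1..t}) (p q : S).

Lemma lepm_add (m1 m2 n1 n2 : 'X_{1..t}) :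
  (m1 <= n1)%MM -> (m2 <= n2)%MM -> (m1 + m2 <= n1 + n2)%MM.
Proof.
move=> /mnm_lepP le1 /mnm_lepP le2; apply/mnm_lepP => i.
by rewrite !mnmDE leq_add.
Qed.

Definition is_edge (ij : 'I_t * 'I_t) := e ij.1 ij.2.

Definition edges_mnm s : 'X_{1..t} := (\sum_(ij <- s) (U_(ij.1) + U_(ij.2)))%MM.

Definition edge_dvd k m :=
  exists s, [/\ size s = k, all is_edge s & (edges_mnm s <= m)%MM].

Definition supp_edge_dvd k p := forall m, m \in msupp p -> edge_dvd k m.

Definition vertex_cover (C : pred 'I_t) := forall i j, e i j -> C i || C j.

Lemma mpolyX_edges_mnm s : 'X_[edges_mnm s] = \prod_(ij <- s) ('X_ij.1 * 'X_ij.2) :> S.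
Proof.
rewrite /edges_mnm (big_morph (fun m => 'X_[m] : S) (@mpolyXD _ _) (@mpolyX0 _ _)).
by apply: eq_bigr => ij _; rewrite mpolyXD.
Qed.

Lemma mdeg_edges_mnm s : mdeg (edges_mnm s) = (2 * size s)%N.
Proof.
rewrite /edges_mnm mdeg_sum -sum1_size big_distrr /=.
by apply: eq_bigr => ij _; rewrite mdegD !mdeg1.
Qed.

Lemma edge_dvd0 m : edge_dvd 0 m.
Proof. by exists [::]; split => //; apply/mnm_lepP => i; rewrite /edges_mnm big_nil mnm0E. Qed.

Lemma edge_dvdD a b m1 m2 : edge_dvd a m1 -> edge_dvd b m2 -> edge_dvd (a + b) (m1 + m2).
Proof.
move=> [s1 [<- e1 le1]] [s2 [<- e2 le2]]; exists (s1 ++ s2).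
by rewrite size_cat all_cat e1 e2 /edges_mnm big_cat lepm_add.
Qed.

Lemma edge_dvd_mdeg k m : edge_dvd k m -> (2 * k <= mdeg m)%N.
Proof. by move=> [s [<- _ le_sm]]; rewrite -mdeg_edges_mnm lemc_mdeg ?lem_leo. Qed.

Lemma supp_edge_dvdM a b p q :
  supp_edge_dvd a p -> supp_edge_dvd b q -> supp_edge_dvd (a + b) (p * q).
Proof.
move=> hp hq m /msuppM_le /allpairsP[[m1 m2] [/= m1p m2q ->]].
exact: edge_dvdD (hp _ m1p) (hq _ m2q).
Qed.

Lemma supp_edge_dvd_is_ideal k : is_ideal (supp_edge_dvd k).
Proof.
split; first by move=> m; rewrite msupp0.
- by move=> p q hp hq m /msuppD_le; rewrite mem_cat => /orP[/hp|/hq].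
- by move=> r p; apply: (supp_edge_dvdM (a := 0)) => m _; exact: edge_dvd0.
Qed.

Lemma supp_edge_dvd_prod (s : seq S) :
  (forall g, g \in s -> supp_edge_dvd 1 g) -> supp_edge_dvd (size s) (\prod_(g <- s) g).
Proof.
elim: s => [|g s IHs] hs; first by rewrite big_nil => m _; exact: edge_dvd0.
rewrite big_cons /= -add1n; apply: supp_edge_dvdM; first exact/hs/mem_head.
by apply: IHs => h hs'; apply: hs; rewrite inE hs' orbT.
Qed.

Lemma edge_ideal_supp_edge_dvd p : I p -> supp_edge_dvd 1 p.
Proof.
apply: ideal_gen_sub; first exact: supp_edge_dvd_is_ideal.
move=> _ [i [j [eij ->]]] m; rewrite -mpolyXD msuppX inE => /eqP ->.
exists [:: (i, j)]; split => //=; first by rewrite /is_edge eij.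
by rewrite /edges_mnm big_seq1 lepm_refl.
Qed.

Lemma ideal_pow_supp_edge_dvd k p : ideal_pow I k p -> supp_edge_dvd k p.
Proof.
apply: ideal_gen_sub; first exact: supp_edge_dvd_is_ideal.
move=> _ [s [<- sI ->]]; apply: supp_edge_dvd_prod => g /sI.
exact: edge_ideal_supp_edge_dvd.
Qed.

Lemma ideal_pow_homog_deg k d p :
  ideal_pow I k p -> p != 0 -> p \is d.-homog -> (2 * k <= d)%N.
Proof.
move=> Ip p_neq0 p_hom; have lead_supp := mlead_supp p_neq0.
rewrite -(dhomog_mf p_hom lead_supp); apply: edge_dvd_mdeg.
exact: ideal_pow_supp_edge_dvd Ip _ lead_supp.
Qed.

Lemma edge_ideal_mulX i j : e i j -> I ('X_i * 'X_j).
Proof. by move=> eij; apply: mem_ideal_gen; exists i, j. Qed.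

Lemma ideal_pow_edges_mnm s : all is_edge s -> ideal_pow I (size s) 'X_[edges_mnm s].
Proof.
move=> s_edges; apply: mem_ideal_gen; exists [seq 'X_ij.1 * 'X_ij.2 | ij <- s].
split; first exact: size_map.
  by move=> _ /mapP[ij /(allP s_edges) eij ->]; apply: edge_ideal_mulX.
by rewrite big_map mpolyX_edges_mnm.
Qed.

Lemma prime_ideal_edges_mnm (P : S -> Prop) s :
  is_prime_ideal P -> P 'X_[edges_mnm s] -> exists i, P 'X_i.
Proof.
move=> Pprime; rewrite mpolyX_edges_mnm -(big_map (fun ij => 'X_ij.1 * 'X_ij.2) xpredT id).
case/(prime_ideal_prod Pprime) => _ /mapP[[i j] _ ->].
by case: Pprime => _ _ /[apply] -[]; [exists i | exists j].
Qed.

End EdgeMonomials.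

Section KillVariables.
Variables (K : fieldType) (t : nat) (C : pred 'I_t).
Local Notation S := {mpoly K[t]}.
Implicit Types (m : 'X_{1..t}) (p : S).

Lemma mpolyX_neq0 m : 'X_[m] != 0 :> S.
Proof. by rewrite -msupp_eq0 msuppX. Qed.

Definition mdeg_in m : nat := (\sum_(i | C i) m i)%N.

Lemma mdeg_inD m1 m2 : mdeg_in (m1 + m2)%MM = (mdeg_in m1 + mdeg_in m2)%N.
Proof. by rewrite /mdeg_in -big_split; apply: eq_bigr => i _; rewrite mnmDE. Qed.

Lemma mdeg_in0 : mdeg_in 0%MM = 0%N.
Proof. by rewrite /mdeg_in big1 // => i _; rewrite mnm0E. Qed.

Lemma mdeg_inMn m k : mdeg_in (m *+ k)%MM = (mdeg_in m * k)%N.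
Proof. by rewrite /mdeg_in big_distrl; apply: eq_bigr => i _; rewrite mulmnE. Qed.

Lemma mdeg_inU i : mdeg_in U_(i)%MM = C i.
Proof.
rewrite /mdeg_in big_mkcond (bigD1 i) //= big1 => [|j /negbTE ji].
  by rewrite mnm1E eqxx addn0; case: (C i).
by rewrite mnm1E eq_sym ji if_same.
Qed.

Lemma mdeg_in_le m1 m2 : (m1 <= m2)%MM -> (mdeg_in m1 <= mdeg_in m2)%N.
Proof. by move=> /mnm_lepP le12; apply: leq_sum => i _. Qed.

(* Its kernel is the ideal generated by the variables in C. *)
Definition kill_vars := comp_mpoly [tuple (if C i then 0 else 'X_i : S) | i < t].

Lemma kill_varsX m : kill_vars 'X_[m] = if mdeg_in m == 0%N then 'X_[m] else 0.
Proof.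
rewrite /kill_vars comp_mpolyX /mdeg_in sum_nat_eq0.
case: ifPn => [/forall_inP m0 | /forall_inPn[i Ci mi_neq0]].
  rewrite [RHS]mpolyXE_id; apply: eq_bigr => i _; rewrite tnth_mktuple.
  by case: ifP => // /m0 /eqP ->; rewrite !expr0.
by rewrite (bigD1 i) //= tnth_mktuple (Ci : C i) expr0n (negbTE mi_neq0) mul0r.
Qed.

Lemma kill_varsE p : kill_vars p = \sum_(m <- msupp p) p@_m *: kill_vars 'X_[m].
Proof.
rewrite /kill_vars {1}(mpolyE p) raddf_sum; apply: eq_bigr => m _.
exact: comp_mpolyZ.
Qed.

Lemma kill_vars_ker_prime : is_prime_ideal (fun p => kill_vars p = 0).
Proof.
rewrite /kill_vars; split; first split.
- exact: raddf0.
- by move=> p q kp kq; rewrite raddfD /= kp kq addr0.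
- by move=> r p kp; rewrite rmorphM /= kp mulr0.
- by rewrite rmorph1; apply/eqP; exact: oner_neq0.
- by move=> p q /eqP; rewrite rmorphM mulf_eq0 => /orP[/eqP|/eqP]; [left | right].
Qed.

End KillVariables.

Section EdgeIdealPowers.
Variables (K : fieldType) (t : nat) (e : rel 'I_t).
Local Notation S := {mpoly K[t]}.
Local Notation I := (@edge_ideal K t e).

Lemma edges_mnm_nseq k (ij : 'I_t * 'I_t) :
  edges_mnm (nseq k ij) = ((U_(ij.1) + U_(ij.2)) *+ k)%MM.
Proof.
elim: k => [|k IHk]; first by rewrite /edges_mnm big_nil.
by rewrite /edges_mnm /= big_cons -/(edges_mnm _) IHk mulmS.
Qed.

Lemma edge_dvd_mdeg_in (C : pred 'I_t) k m :
  vertex_cover e C -> edge_dvd e k m -> (k <= mdeg_in C m)%N.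
Proof.
move=> cover [s [<- s_edges le_sm]]; apply: leq_trans (mdeg_in_le C le_sm).
rewrite /edges_mnm (big_morph _ (mdeg_inD C) (mdeg_in0 C)) -sum1_size !big_seq.
apply: leq_sum => ij ij_s; rewrite mdeg_inD !mdeg_inU.
by have := cover _ _ (allP s_edges _ ij_s); case: (C _); case: (C _).
Qed.

Lemma colon_ideal_pow_low_deg i j k d f (P : S -> Prop) :
  e i j -> (d.+1 < 2 * k)%N -> f \is d.-homog ->
  Ass (ideal_pow I k) P -> ~ same_ideal (colon (ideal_pow I k) f) P.
Proof.
move=> eij d_lt f_hom [Pprime _] fP.
have idJ : is_ideal (ideal_pow I k) := ideal_gen_is_ideal _.
have f_neq0 : f != 0.
  by case: Pprime => _ P1 _; apply: colon_neq0 P1 fP; case: idJ.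
have [a Pa] : exists a, P 'X_a.
  apply: (prime_ideal_edges_mnm (s := nseq k (i, j))) Pprime _.
  apply: ideal_sub_colon idJ fP _ _; rewrite -{1}(size_nseq k (i, j)).
  by apply: ideal_pow_edges_mnm; rewrite all_nseq /is_edge eij orbT.
have Xaf_hom : 'X_a * f \is d.+1.-homog.
  by rewrite -add1n; apply: dhomogM => //; rewrite dhomogX; apply/eqP; exact: mdeg1.
have Xaf_neq0 : 'X_a * f != 0 by rewrite mulf_neq0 ?mpolyX_neq0.
have := ideal_pow_homog_deg (proj2 (fP _) Pa) Xaf_neq0 Xaf_hom.
by rewrite leqNgt d_lt.
Qed.

Section Colon.
Variables x y : 'I_t.
Hypothesis exy : e x y.

Definition colon_mnm n : 'X_{1..t} := (U_(x) *+ n.+1 + U_(y) *+ n)%MM.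

Lemma mdeg_colon_mnm n : mdeg (colon_mnm n) = (2 * n + 1)%N.
Proof. by rewrite mdegD !mdegMn !mdeg1 !mul1n addSn addnn -mul2n addn1. Qed.

Lemma mulX_colon_mnm n m :
  mdeg_in (e x) m != 0%N -> ideal_pow I n.+1 ('X_[m] * 'X_[colon_mnm n]).
Proof.
rewrite /mdeg_in sum_nat_eq0 => /forall_inPn[i xi mi_neq0].
have -> : 'X_[m] * 'X_[colon_mnm n] =
          'X_[m - U_(i)] * 'X_[edges_mnm ((x, i) :: nseq n (x, y))] :> S.
  rewrite -!mpolyXD; congr 'X_[_]; apply/mnmP => j.
  rewrite /edges_mnm big_cons -/(edges_mnm _) edges_mnm_nseq /colon_mnm.
  rewrite !(mnmDE, mnmBE, mulmnE, mnm1E) /=.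
  move: mi_neq0; case: (x =P j); case: (i =P j); case: (y =P j) => /= *; subst; lia.
have [_ _ JM] : is_ideal (ideal_pow I n.+1) := ideal_gen_is_ideal _.
apply: JM; have := @ideal_pow_edges_mnm K t e ((x, i) :: nseq n (x, y)).
rewrite /= size_nseq; apply.
by rewrite all_nseq /is_edge /= (xi : e x i) exy orbT.
Qed.

Hypotheses (x_loopless : ~~ e x x) (cover : vertex_cover e (e x)).

Lemma mdeg_in_colon_mnm n : mdeg_in (e x) (colon_mnm n) = n.
Proof. by rewrite mdeg_inD !mdeg_inMn !mdeg_inU (negbTE x_loopless) exy mul1n. Qed.

Lemma colon_mnm_ker n g :
  ideal_pow I n.+1 (g * 'X_[colon_mnm n]) -> kill_vars (e x) g = 0.
Proof.
move=> Jg; rewrite kill_varsE big1_seq // => m /andP[_ m_supp].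
rewrite kill_varsX; case: eqP => [m0|]; last by rewrite scaler0.
have : (colon_mnm n + m)%MM \in msupp (g * 'X_[colon_mnm n]).
  by rewrite mcoeff_msupp mcoeffMX -mcoeff_msupp.
move/(ideal_pow_supp_edge_dvd Jg)/(edge_dvd_mdeg_in cover).
by rewrite mdeg_inD m0 addn0 mdeg_in_colon_mnm ltnn.
Qed.

Lemma colon_edge_ideal_pow n :
  same_ideal (colon (ideal_pow I n.+1) 'X_[colon_mnm n]) (fun g => kill_vars (e x) g = 0).
Proof.
have [J0 _ JM] : is_ideal (ideal_pow I n.+1) := ideal_gen_is_ideal _.
move=> g; split; first exact: colon_mnm_ker.
move=> kill_g; rewrite /colon -[g]subr0 -{1}kill_g kill_varsE {1}(mpolyE g) -sumrB.
rewrite mulr_suml; apply: ideal_sum => [|m _]; first exact: ideal_gen_is_ideal.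
rewrite -scalerBr -scalerAl -mul_mpolyC; apply: JM.
rewrite kill_varsX; case: ifPn => [_ | m_nbr]; first by rewrite subrr mul0r.
by rewrite subr0; apply: mulX_colon_mnm.
Qed.

End Colon.
End EdgeIdealPowers.

Section VNumberOne.
Variables (K : fieldType) (t : nat) (e : rel 'I_t).
Hypotheses (esym : ssrbool.symmetric e) (eirr : irreflexive e).
Local Notation S := {mpoly K[t]}.
Local Notation I := (@edge_ideal K t e).

Lemma edge_dvd1_adj z x : edge_dvd e 1 (U_(z) + U_(x))%MM -> e x z.
Proof.
case=> s [s1 s_edges le_s]; case: s s1 s_edges le_s => [|[i j] [|]] //= _.
rewrite andbT /is_edge /edges_mnm big_seq1 /= => eij /mnm_lepP le.
have iz : (i == z) || (i == x).
  by move: (le i); rewrite !mnmDE !mnm1E eqxx (eq_sym z) (eq_sym x);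
    case: (i == z); case: (i == x).
have jz : (j == z) || (j == x).
  by move: (le j); rewrite !mnmDE !mnm1E eqxx (eq_sym z) (eq_sym x) addnC;
    case: (j == z); case: (j == x).
by case/orP: iz => /eqP ?; case/orP: jz => /eqP ?; subst;
  first [by rewrite eirr in eij | by [] | by rewrite esym].
Qed.

Lemma v_number1_nbr_cover : v_number_is I 1 -> exists x, vertex_cover e (e x).
Proof.
move=> [[f [P [f_hom [Pprime _] fP]]] _].
have idI : is_ideal I := ideal_gen_is_ideal _.
have f_neq0 : f != 0 by case: Pprime => _ P1 _; apply: colon_neq0 P1 fP; case: idI.
have [x lead_f] : exists x, mlead f = U_(x)%MM.
  by have /eqP/mdeg1P[x /eqP ->] := dhomog_mf f_hom (mlead_supp f_neq0); exists x.
have adj z : P 'X_z -> e x z.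
  move=> /fP Iz; apply: edge_dvd1_adj; apply: (edge_ideal_supp_edge_dvd Iz).
  by rewrite mulrC mcoeff_msupp mcoeffMX -lead_f mleadc_eq0.
exists x => i j eij; have [_ _ Pprod] := Pprime.
have /Pprod[/adj -> // | /adj ->] := ideal_sub_colon idI fP (edge_ideal_mulX K eij).
by rewrite orbT.
Qed.

Lemma v_number1_dominating_edge :
  v_number_is I 1 -> exists x y, e x y /\ vertex_cover e (e x).
Proof.
move=> v1; have [x cover] := v_number1_nbr_cover v1.
have [[i j] /= eij | no_edge] := pickP (fun ij : 'I_t * 'I_t => e ij.1 ij.2).
  by case/orP: (cover i j eij) => ?; [exists x, i | exists x, j].
have [I_0 _ _] : is_ideal I := ideal_gen_is_ideal _.
have I0 (g : S) : I g <-> g = 0.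
  split => [| ->] //.
  apply: (ideal_gen_sub (J := fun g : S => g = 0)) => [| h [i [j [eij _]]]].
  - by split => // [a b -> -> | r a ->]; rewrite ?addr0 ?mulr0.
  - by have := no_edge (i, j); rewrite /= eij.
by have := v_number_is_zero_ideal I0 v1.
Qed.

End VNumberOne.

Theorem corollary4p16 (K : fieldType) (t : nat) (e : rel 'I_t) :
  simple_graph e ->
  v_number_is (@edge_ideal K t e) 1 ->
  forall n : nat, (1 <= n)%N ->
    v_number_is (ideal_pow (@edge_ideal K t e) n.+1) (2 * n + 1).
Proof.
move=> [esym eirr] v1 n _.
have [x [y [exy cover]]] := v_number1_dominating_edge esym eirr v1.
have colon_eq := colon_edge_ideal_pow exy (negbT (eirr x)) cover n.
split.
  exists 'X_[colon_mnm x y n], (fun g => kill_vars (e x) g = 0); split.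
  - by rewrite dhomogX /= mdeg_colon_mnm.
  - by split; [exact: kill_vars_ker_prime | exists 'X_[colon_mnm x y n]].
  - exact: colon_eq.
move=> d f P d_lt; apply: colon_ideal_pow_low_deg exy _; lia.
Qed.
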